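(* Let $\mathcal{C}$ be a Grothendieck site with enough points, let $X,Y$ be presheaves of groupoids on $\mathcal{C}$ with $\Gamma=\mathbb{Z}/2\mathbb{Z}$-actions, and let $f\colon X\to Y$ be a $\Gamma$-equivariant morphism. If $f$ is a local weak equivalence, then $f^{h\Gamma}\colon X^{h\Gamma}\to Y^{h\Gamma}$ is a local weak equivalence.
   Context: A groupoid is a small category with all morphisms invertible; a map of groupoids is a weak equivalence if it is an equivalence of categories. A presheaf of groupoids is a strict contravariant functor from $\mathcal{C}$ to groupoids; stalks at points are defined by the same colimit formula as for presheaves of sets. A morphism of presheaves of groupoids is a local weak equivalence if it induces a weak equivalence of groupoids on all stalks at points of $\mathcal{C}$. A $\Gamma$-action on a presheaf of groupoids is a $\Gamma$-action on each $X(U)$ (on objects and morphisms, compatible with structure maps; nontrivial element $x\mapsto\bar x$) compatible with restrictions; a $\Gamma$-equivariant morphism commutes with the actions on sections. For a groupoid $X$ with $\Gamma$-action, $X^{h\Gamma}$ has objects $(x,\phi)$ with $\phi\in\mathrm{Hom}(x,\bar x)$, $\bar\phi=\phi^{-1}$, and arrows $(x,\phi)\to(x_1,\phi_1)$ the $\alpha\colon x\to x_1$ with $\phi_1\alpha=\bar\alpha\phi$; for presheaves $X^{h\Gamma}(U)=X(U)^{h\Gamma}$, and $f^{h\Gamma}$ is given on sections by $(x,\phi)\mapsto(f(x),f(\phi))$, $\alpha\mapsto f(\alpha)$. *)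

(* Classical axioms (constructive indefinite
   description, excluded middle) are used only to build data on quotients. *)
From Stdlib Require Import ClassicalEpsilon.
Set Implicit Arguments.
Unset Strict Implicit.

Record Cat := {
  cob :> Type;
  chom : cob -> cob -> Type;
  cid : forall U, chom U U;
  ccomp : forall U V W, chom V W -> chom U V -> chom U W;   (* ccomp g f = g o f *)
  ccomp_id_l : forall U V (f : chom U V), ccomp (cid V) f = f;
  ccomp_id_r : forall U V (f : chom U V), ccomp f (cid U) = f;
  ccomp_assoc : forall U V W Z (f : chom U V) (g : chom V W) (h : chom W Z),
      ccomp h (ccomp g f) = ccomp (ccomp h g) f }.
Arguments chom {c} _ _.
Arguments cid {c} _.
Arguments ccomp {c U V W} _ _.

Definition sieve (C : Cat) (U : C) := forall V : C, chom V U -> Prop.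
Definition is_sieve (C : Cat) (U : C) (R : sieve U) : Prop :=
  forall (V W : C) (f : chom V U) (g : chom W V), R V f -> R W (ccomp f g).
Definition maximal_sieve (C : Cat) (U : C) : sieve U := fun _ _ => True.
Arguments maximal_sieve {C} U _ _.
Definition pullback_sieve (C : Cat) (U V : C) (h : chom V U) (R : sieve U) : sieve V :=
  fun W g => R W (ccomp h g).

Record Site := {
  scat :> Cat;
  cov : forall U : scat, sieve U -> Prop;
  cov_sieve : forall U R, @cov U R -> is_sieve R;
  cov_max : forall U, @cov U (maximal_sieve U);
  cov_stable : forall U R V (h : chom V U), @cov U R -> @cov V (pullback_sieve h R);
  cov_trans : forall U R R', @cov U R -> is_sieve R' ->
      (forall V (h : chom V U), R V h -> @cov V (pullback_sieve h R')) -> @cov U R' }.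

(* Points of a site: flat (= filtering) covariant functors u : C -> Set *)
(* sending covering sieves to jointly surjective families               *)
(* (these correspond to the points of the topos Sh(C)).                 *)

Record Point (S : Site) := {
  pt : S -> Type;
  ptmap : forall U V : S, chom U V -> pt U -> pt V;
  ptmap_id : forall U x, ptmap (cid U) x = x;
  ptmap_comp : forall U V W (f : chom U V) (g : chom V W) x,
      ptmap (ccomp g f) x = ptmap g (ptmap f x);
  pt_nonempty : exists U, inhabited (pt U);
  pt_cone : forall U V (x : pt U) (y : pt V),
      exists W (z : pt W) (f : chom W U) (g : chom W V), ptmap f z = x /\ ptmap g z = y;
  pt_equalize : forall U V (f g : chom V U) (y : pt V), ptmap f y = ptmap g y ->
      exists W (z : pt W) (h : chom W V), ptmap h z = y /\ ccomp f h = ccomp g h;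
  pt_cont : forall U (R : sieve U), @cov S U R -> forall x : pt U,
      exists V (f : chom V U) (y : pt V), R V f /\ ptmap f y = x }.
Arguments ptmap {S} p {U V} _ _.

Definition quot (T : Type) (R : T -> T -> Prop) := {P : T -> Prop | exists t, P = R t}.
Definition cls (T : Type) (R : T -> T -> Prop) (t : T) : quot R :=
  exist _ (R t) (ex_intro _ t eq_refl).
Definition repr (T : Type) (R : T -> T -> Prop) (q : quot R) : T :=
  proj1_sig (constructive_indefinite_description _ (proj2_sig q)).
Arguments cls {T} R t.

Definition germ (S : Site) (p : Point S) (F : S -> Type) := {U : S & (pt p U * F U)%type}.

(* Germ equivalence: equal after restriction to a common refinement in the
   (cofiltered) category of elements of p.  This is the colimit formula. *)
Definition germ_rel (S : Site) (p : Point S) (F : S -> Type)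
    (Fr : forall U V : S, chom V U -> F U -> F V) (r1 r2 : germ p F) : Prop :=
  exists (W : S) (z : pt p W) (f : chom W (projT1 r1)) (g : chom W (projT1 r2)),
    ptmap p f z = fst (projT2 r1) /\ ptmap p g z = fst (projT2 r2) /\
    Fr _ _ f (snd (projT2 r1)) = Fr _ _ g (snd (projT2 r2)).
Arguments germ_rel {S} p {F} Fr r1 r2.

Definition stalk (S : Site) (p : Point S) (F : S -> Type)
    (Fr : forall U V : S, chom V U -> F U -> F V) := quot (germ_rel p Fr).
Arguments stalk {S} p {F} Fr.

Definition stalk_map (S : Site) (p : Point S) (F G : S -> Type)
    (Fr : forall U V : S, chom V U -> F U -> F V)
    (Gr : forall U V : S, chom V U -> G U -> G V)
    (phi : forall U, F U -> G U) (q : stalk p Fr) : stalk p Gr :=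
  let r := repr q in
  cls (germ_rel p Gr) (existT _ (projT1 r) (fst (projT2 r), phi _ (snd (projT2 r)))).
Arguments stalk_map {S} p {F G} Fr Gr phi q.

(* encoded by object type, arrow type, source, target, identities and   *)
(* composition (cmp g f = g o f, meaningful when src g = tgt f).        *)

Record PreGpd := {
  Ob : Type; Arr : Type;
  src : Arr -> Ob; tgt : Arr -> Ob;
  idg : Ob -> Arr; cmp : Arr -> Arr -> Arr }.
Arguments src {p} _.
Arguments tgt {p} _.
Arguments idg {p} _.
Arguments cmp {p} _ _.

Record is_gpd (G : PreGpd) : Prop := {
  src_id : forall x : Ob G, src (idg x) = x;
  tgt_id : forall x : Ob G, tgt (idg x) = x;
  src_cmp : forall g f : Arr G, src g = tgt f -> src (cmp g f) = src f;
  tgt_cmp : forall g f : Arr G, src g = tgt f -> tgt (cmp g f) = tgt g;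
  cmp_id_l : forall f : Arr G, cmp (idg (tgt f)) f = f;
  cmp_id_r : forall f : Arr G, cmp f (idg (src f)) = f;
  cmp_assoc : forall h g f : Arr G, src h = tgt g -> src g = tgt f ->
      cmp h (cmp g f) = cmp (cmp h g) f;
  has_inv : forall f : Arr G, exists g : Arr G,
      src g = tgt f /\ tgt g = src f /\ cmp g f = idg (src f) /\ cmp f g = idg (tgt f) }.

Record PreFun (G H : PreGpd) := { fo : Ob G -> Ob H; fa : Arr G -> Arr H }.

Record is_fun (G H : PreGpd) (F : PreFun G H) : Prop := {
  fun_src : forall a, src (fa F a) = fo F (src a);
  fun_tgt : forall a, tgt (fa F a) = fo F (tgt a);
  fun_id : forall x, fa F (idg x) = idg (fo F x);
  fun_cmp : forall g f, src g = tgt f -> fa F (cmp g f) = cmp (fa F g) (fa F f) }.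

Definition idF (G : PreGpd) : PreFun G G := {| fo := fun x => x; fa := fun a => a |}.
Definition compF (G H K : PreGpd) (F2 : PreFun H K) (F1 : PreFun G H) : PreFun G K :=
  {| fo := fun x => fo F2 (fo F1 x); fa := fun a => fa F2 (fa F1 a) |}.

Definition is_iso (G : PreGpd) (a : Arr G) : Prop :=
  exists b : Arr G, src b = tgt a /\ tgt b = src a /\
    cmp b a = idg (src a) /\ cmp a b = idg (tgt a).

Definition nat_iso (G H : PreGpd) (F K : PreFun G H) (eta : Ob G -> Arr H) : Prop :=
  (forall x, src (eta x) = fo F x /\ tgt (eta x) = fo K x /\ is_iso (eta x)) /\
  (forall a, cmp (eta (tgt a)) (fa F a) = cmp (fa K a) (eta (src a))).

(* weak equivalence of groupoids = equivalence of categories *)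
Definition is_equivalence (G H : PreGpd) (F : PreFun G H) : Prop :=
  exists (K : PreFun H G) (eta : Ob G -> Arr G) (eps : Ob H -> Arr H),
    is_fun K /\ nat_iso (idF G) (compF K F) eta /\ nat_iso (compF F K) (idF H) eps.

Record PrePGpd (C : Cat) := {
  psec : C -> PreGpd;
  pres : forall U V : C, chom V U -> PreFun (psec U) (psec V) }.
Arguments pres {C} p {U V} _.

Record is_pgpd (C : Cat) (X : PrePGpd C) : Prop := {
  sec_gpd : forall U, is_gpd (psec X U);
  res_fun : forall U V (h : chom V U), is_fun (pres X h);
  res_id_o : forall U x, fo (pres X (cid U)) x = x;
  res_id_a : forall U a, fa (pres X (cid U)) a = a;
  res_comp_o : forall U V W (f : chom V U) (g : chom W V) x,
      fo (pres X (ccomp f g)) x = fo (pres X g) (fo (pres X f) x);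
  res_comp_a : forall U V W (f : chom V U) (g : chom W V) a,
      fa (pres X (ccomp f g)) a = fa (pres X g) (fa (pres X f) a) }.

Record PGpd (C : Cat) := { pg :> PrePGpd C; pg_ax : is_pgpd pg }.

Record PreMor (C : Cat) (X Y : PrePGpd C) := {
  mc : forall U, PreFun (psec X U) (psec Y U) }.

Record is_mor (C : Cat) (X Y : PrePGpd C) (f : PreMor X Y) : Prop := {
  mor_fun : forall U, is_fun (mc f U);
  mor_nat_o : forall U V (h : chom V U) x,
      fo (pres Y h) (fo (mc f U) x) = fo (mc f V) (fo (pres X h) x);
  mor_nat_a : forall U V (h : chom V U) a,
      fa (pres Y h) (fa (mc f U) a) = fa (mc f V) (fa (pres X h) a) }.

Record PMor (C : Cat) (X Y : PGpd C) := { pm :> PreMor X Y; pm_ax : is_mor pm }.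

Definition obF (C : Cat) (X : PrePGpd C) : C -> Type := fun U => Ob (psec X U).
Definition arF (C : Cat) (X : PrePGpd C) : C -> Type := fun U => Arr (psec X U).
Definition obR (C : Cat) (X : PrePGpd C) : forall U V : C, chom V U -> obF X U -> obF X V :=
  fun U V h => fo (pres X h).
Definition arR (C : Cat) (X : PrePGpd C) : forall U V : C, chom V U -> arF X U -> arF X V :=
  fun U V h => fa (pres X h).

Arguments obF {C} X _.
Arguments arF {C} X _.
Arguments obR {C} X.
Arguments arR {C} X.

Definition refine_t (S : Site) (p : Point S) (U1 U2 : S) :=
  {W : S & (pt p W * chom W U1 * chom W U2)%type}.

(* composition of germs of arrows: compose representatives at a common
   refinement where they are composable (well defined on composable germs) *)
Definition stalk_cmp (S : Site) (p : Point S) (X : PrePGpd S)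
    (b a : stalk p (arR X)) : stalk p (arR X) :=
  let ra := repr a in let rb := repr b in
  let cond := fun t : refine_t p (projT1 ra) (projT1 rb) =>
      ptmap p (snd (fst (projT2 t))) (fst (fst (projT2 t))) = fst (projT2 ra) /\
      ptmap p (snd (projT2 t)) (fst (fst (projT2 t))) = fst (projT2 rb) /\
      src (fa (pres X (snd (projT2 t))) (snd (projT2 rb)))
        = tgt (fa (pres X (snd (fst (projT2 t)))) (snd (projT2 ra))) in
  match excluded_middle_informative (exists t, cond t) with
  | left h =>
      let t := proj1_sig (constructive_indefinite_description _ h) in
      cls (germ_rel p (arR X))
        (existT _ (projT1 t) (fst (fst (projT2 t)),
           cmp (fa (pres X (snd (projT2 t))) (snd (projT2 rb)))
               (fa (pres X (snd (fst (projT2 t)))) (snd (projT2 ra)))))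
  | right _ => a
  end.

Arguments stalk_cmp {S} p X b a.

Definition stalk_gpd (S : Site) (p : Point S) (X : PrePGpd S) : PreGpd := {|
  Ob := stalk p (obR X);
  Arr := stalk p (arR X);
  src := stalk_map p (arR X) (obR X) (fun U => @src (psec X U));
  tgt := stalk_map p (arR X) (obR X) (fun U => @tgt (psec X U));
  idg := stalk_map p (obR X) (arR X) (fun U => @idg (psec X U));
  cmp := stalk_cmp p X |}.

Definition stalk_fun (S : Site) (p : Point S) (X Y : PrePGpd S) (f : PreMor X Y) :
    PreFun (stalk_gpd p X) (stalk_gpd p Y) :=
  @Build_PreFun (stalk_gpd p X) (stalk_gpd p Y)
    (stalk_map p (obR X) (obR Y) (fun U => fo (mc f U)))
    (stalk_map p (arR X) (arR Y) (fun U => fa (mc f U))).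

Definition local_we (S : Site) (X Y : PrePGpd S) (f : PreMor X Y) : Prop :=
  forall p : Point S, is_equivalence (stalk_fun p f).

(* Enough points: the family of all points is conservative on sheaves   *)
(* of sets.                                                             *)

Record PSet (C : Cat) := {
  ps : C -> Type;
  psr : forall U V : C, chom V U -> ps U -> ps V;
  psr_id : forall U s, psr (cid U) s = s;
  psr_comp : forall U V W (f : chom V U) (g : chom W V) s,
      psr (ccomp f g) s = psr g (psr f s) }.
Arguments psr {C} p {U V} _ _.

Definition is_sheaf (S : Site) (F : PSet S) : Prop :=
  forall (U : S) (R : sieve U), @cov S U R ->
  forall s : forall (V : S) (f : chom V U), R V f -> ps F V,
    (forall V (f : chom V U) (h : R V f) W (g : chom W V) (h' : R W (ccomp f g)),
        psr F g (s V f h) = s W (ccomp f g) h') ->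
    exists! x : ps F U, forall V (f : chom V U) (h : R V f), psr F f x = s V f h.

Definition is_nat (C : Cat) (F G : PSet C) (phi : forall U, ps F U -> ps G U) : Prop :=
  forall U V (f : chom V U) s, psr G f (phi U s) = phi V (psr F f s).

Definition bijective (A B : Type) (g : A -> B) : Prop :=
  (forall x y, g x = g y -> x = y) /\ (forall y, exists x, g x = y).

Definition enough_points (S : Site) : Prop :=
  forall (F G : PSet S) (phi : forall U, ps F U -> ps G U),
    is_sheaf F -> is_sheaf G -> is_nat phi ->
    (forall p : Point S, bijective (stalk_map p (@psr _ F) (@psr _ G) phi)) ->
    forall U, bijective (phi U).

(* Gamma = Z/2 actions (given by the action of the nontrivial element)  *)

Record GammaAction (C : Cat) (X : PGpd C) := {
  tau : forall U, PreFun (psec X U) (psec X U);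
  tau_fun : forall U, is_fun (tau U);
  tau_invol_o : forall U x, fo (tau U) (fo (tau U) x) = x;
  tau_invol_a : forall U a, fa (tau U) (fa (tau U) a) = a;
  tau_res_o : forall U V (h : chom V U) x,
      fo (pres X h) (fo (tau U) x) = fo (tau V) (fo (pres X h) x);
  tau_res_a : forall U V (h : chom V U) a,
      fa (pres X h) (fa (tau U) a) = fa (tau V) (fa (pres X h) a) }.

Definition equivariant (C : Cat) (X Y : PGpd C) (aX : GammaAction X) (aY : GammaAction Y)
    (f : PMor X Y) : Prop :=
  (forall U x, fo (mc f U) (fo (tau aX U) x) = fo (tau aY U) (fo (mc f U) x)) /\
  (forall U a, fa (mc f U) (fa (tau aX U) a) = fa (tau aY U) (fa (mc f U) a)).

(* objects (x, phi), phi : x -> xbar, with phibar = phi^-1 *)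
Definition hob (G : PreGpd) (t : PreFun G G) :=
  {q : (Ob G * Arr G)%type |
     src (snd q) = fst q /\ tgt (snd q) = fo t (fst q) /\
     cmp (fa t (snd q)) (snd q) = idg (fst q) /\
     cmp (snd q) (fa t (snd q)) = idg (fo t (fst q))}.
Definition hx (G : PreGpd) (t : PreFun G G) (o : hob t) : Ob G := fst (proj1_sig o).
Definition hphi (G : PreGpd) (t : PreFun G G) (o : hob t) : Arr G := snd (proj1_sig o).

Definition harr (G : PreGpd) (t : PreFun G G) :=
  {q : (hob t * hob t * Arr G)%type |
     src (snd q) = hx (fst (fst q)) /\ tgt (snd q) = hx (snd (fst q)) /\
     cmp (hphi (snd (fst q))) (snd q) = cmp (fa t (snd q)) (hphi (fst (fst q)))}.

Lemma hid_ok (G : PreGpd) (t : PreFun G G) (HG : is_gpd G) (Ht : is_fun t) (o : hob t) :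
  src (idg (hx o)) = hx o /\ tgt (idg (hx o)) = hx o /\
  cmp (hphi o) (idg (hx o)) = cmp (fa t (idg (hx o))) (hphi o).
Proof.
  destruct o as [[x ph] [H1 [H2 ?]]]; unfold hx, hphi; simpl in *.
  split; [apply (src_id HG) | split; [apply (tgt_id HG) |]].
  subst x. rewrite (fun_id Ht), <- H2.
  rewrite (cmp_id_r HG), (cmp_id_l HG). reflexivity.
Qed.

Definition hid (G : PreGpd) (t : PreFun G G) (HG : is_gpd G) (Ht : is_fun t)
    (o : hob t) : harr t :=
  exist _ (o, o, idg (hx o)) (hid_ok HG Ht o).

Lemma hcmp_ok (G : PreGpd) (t : PreFun G G) (HG : is_gpd G) (Ht : is_fun t)
    (b a : harr t) (e : fst (fst (proj1_sig b)) = snd (fst (proj1_sig a))) :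
  let al := snd (proj1_sig a) in let be := snd (proj1_sig b) in
  let o1 := fst (fst (proj1_sig a)) in let o3 := snd (fst (proj1_sig b)) in
  src (cmp be al) = hx o1 /\ tgt (cmp be al) = hx o3 /\
  cmp (hphi o3) (cmp be al) = cmp (fa t (cmp be al)) (hphi o1).
Proof.
  destruct a as [[[o1 o2] al] [Ha1 [Ha2 Ha3]]].
  destruct b as [[[o2' o3] be] [Hb1 [Hb2 Hb3]]].
  simpl in *. subst o2'.
  destruct o1 as [[x1 p1] [P11 [P12 ?]]].
  destruct o2 as [[x2 p2] [P21 [P22 ?]]].
  destruct o3 as [[x3 p3] [P31 ?]].
  unfold hx, hphi in *; simpl in *.
  assert (Hc : src be = tgt al) by congruence.
  split; [rewrite (src_cmp HG Hc); exact Ha1 |].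
  split; [rewrite (tgt_cmp HG Hc); exact Hb2 |].
  rewrite (fun_cmp Ht Hc).
  rewrite (cmp_assoc HG) by congruence.
  rewrite Hb3.
  rewrite <- (cmp_assoc HG) by (rewrite ?(fun_src Ht); congruence).
  rewrite Ha3.
  rewrite (cmp_assoc HG) by (rewrite ?(fun_src Ht), ?(fun_tgt Ht); congruence).
  reflexivity.
Qed.

Definition hcmp (G : PreGpd) (t : PreFun G G) (HG : is_gpd G) (Ht : is_fun t)
    (b a : harr t) : harr t :=
  match excluded_middle_informative (fst (fst (proj1_sig b)) = snd (fst (proj1_sig a))) with
  | left e => exist _ (fst (fst (proj1_sig a)), snd (fst (proj1_sig b)),
                       cmp (snd (proj1_sig b)) (snd (proj1_sig a))) (hcmp_ok HG Ht e)
  | right _ => a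
  end.

Definition hfp_gpd (G : PreGpd) (t : PreFun G G) (HG : is_gpd G) (Ht : is_fun t) : PreGpd := {|
  Ob := hob t;
  Arr := harr t;
  src := fun a => fst (fst (proj1_sig a));
  tgt := fun a => snd (fst (proj1_sig a));
  idg := hid HG Ht;
  cmp := hcmp HG Ht |}.

Lemma hmap_ob_ok (G H : PreGpd) (tG : PreFun G G) (tH : PreFun H H) (F : PreFun G H)
    (HF : is_fun F) (HtG : is_fun tG) (invG : forall x, fo tG (fo tG x) = x)
    (co : forall x, fo F (fo tG x) = fo tH (fo F x))
    (ca : forall a, fa F (fa tG a) = fa tH (fa F a)) (o : hob tG) :
  let x := fo F (hx o) in let ph := fa F (hphi o) in
  src ph = x /\ tgt ph = fo tH x /\ cmp (fa tH ph) ph = idg x /\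
  cmp ph (fa tH ph) = idg (fo tH x).
Proof.
  destruct o as [[x ph] [H1 [H2 [H3 H4]]]]; unfold hx, hphi; simpl in *.
  split; [rewrite (fun_src HF); congruence |].
  split; [rewrite (fun_tgt HF), <- co; congruence |].
  rewrite <- ca, <- co.
  split.
  - rewrite <- (fun_cmp HF) by (rewrite (fun_src HtG); congruence).
    rewrite H3, (fun_id HF). reflexivity.
  - rewrite <- (fun_cmp HF) by (rewrite (fun_tgt HtG), H2, invG; congruence).
    rewrite H4, (fun_id HF). reflexivity.
Qed.

Definition hmap_ob (G H : PreGpd) (tG : PreFun G G) (tH : PreFun H H) (F : PreFun G H)
    (HF : is_fun F) (HtG : is_fun tG) (invG : forall x, fo tG (fo tG x) = x)
    (co : forall x, fo F (fo tG x) = fo tH (fo F x))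
    (ca : forall a, fa F (fa tG a) = fa tH (fa F a)) (o : hob tG) : hob tH :=
  exist _ (fo F (hx o), fa F (hphi o)) (hmap_ob_ok HF HtG invG co ca o).

Lemma hmap_arr_ok (G H : PreGpd) (tG : PreFun G G) (tH : PreFun H H) (F : PreFun G H)
    (HF : is_fun F) (HtG : is_fun tG) (invG : forall x, fo tG (fo tG x) = x)
    (co : forall x, fo F (fo tG x) = fo tH (fo F x))
    (ca : forall a, fa F (fa tG a) = fa tH (fa F a)) (a : harr tG) :
  let o1 := hmap_ob HF HtG invG co ca (fst (fst (proj1_sig a))) in
  let o2 := hmap_ob HF HtG invG co ca (snd (fst (proj1_sig a))) in
  let al := fa F (snd (proj1_sig a)) in
  src al = hx o1 /\ tgt al = hx o2 /\ cmp (hphi o2) al = cmp (fa tH al) (hphi o1).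
Proof.
  destruct a as [[[o1 o2] al] [Ha1 [Ha2 Ha3]]].
  destruct o1 as [[x1 p1] [P11 [P12 ?]]].
  destruct o2 as [[x2 p2] [P21 [P22 ?]]].
  unfold hmap_ob, hx, hphi in *; simpl in *.
  split; [rewrite (fun_src HF); congruence |].
  split; [rewrite (fun_tgt HF); congruence |].
  rewrite <- ca.
  rewrite <- (fun_cmp HF) by congruence.
  rewrite <- (fun_cmp HF) by (rewrite (fun_src HtG); congruence).
  rewrite Ha3. reflexivity.
Qed.

Definition hfp_map (G H : PreGpd) (tG : PreFun G G) (tH : PreFun H H)
    (HG : is_gpd G) (HtG : is_fun tG) (HH : is_gpd H) (HtH : is_fun tH)
    (F : PreFun G H) (HF : is_fun F) (invG : forall x, fo tG (fo tG x) = x)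
    (co : forall x, fo F (fo tG x) = fo tH (fo F x))
    (ca : forall a, fa F (fa tG a) = fa tH (fa F a)) :
    PreFun (hfp_gpd HG HtG) (hfp_gpd HH HtH) :=
  @Build_PreFun (hfp_gpd HG HtG) (hfp_gpd HH HtH)
    (hmap_ob HF HtG invG co ca)
    (fun a : harr tG => exist _ (hmap_ob HF HtG invG co ca (fst (fst (proj1_sig a))),
                          hmap_ob HF HtG invG co ca (snd (fst (proj1_sig a))),
                          fa F (snd (proj1_sig a))) (hmap_arr_ok HF HtG invG co ca a) : harr tH).

Definition hfp (C : Cat) (X : PGpd C) (aX : GammaAction X) : PrePGpd C := {|
  psec := fun U => hfp_gpd (sec_gpd (pg_ax X) U) (tau_fun aX U);
  pres := fun U V h =>
    hfp_map (sec_gpd (pg_ax X) U) (tau_fun aX U) (sec_gpd (pg_ax X) V) (tau_fun aX V)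
      (res_fun (pg_ax X) h) (fun x => tau_invol_o aX x) (tau_res_o aX h) (tau_res_a aX h) |}.

Definition hfp_mor (C : Cat) (X Y : PGpd C) (aX : GammaAction X) (aY : GammaAction Y)
    (f : PMor X Y) (Hf : equivariant aX aY f) : PreMor (hfp aX) (hfp aY) :=
  @Build_PreMor C (hfp aX) (hfp aY) (fun U =>
    hfp_map (sec_gpd (pg_ax X) U) (tau_fun aX U) (sec_gpd (pg_ax Y) U) (tau_fun aY U)
      (mor_fun (pm_ax f) U) (fun x => tau_invol_o aX x) (proj1 Hf U) (proj2 Hf U)).

(* A functor of groupoids is an equivalence iff it is faithful, full and essentially surjective.
   For the functor induced on stalks at a point p, each of these properties is equivalent to a
   local version: the required equation, or the required lift, exists after restriction along
   some arrow of the category of elements of p.  These local properties pass from f to f^hGamma.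
   Faithfulness is immediate.  For fullness, lift an arrow of Y^hGamma along f; its compatibility
   phi1 alpha = bar(alpha) phi holds after applying f, hence locally by faithfulness.  For
   essential surjectivity, pick e : f x -> y, transport the structure psi of y along e to an arrow
   f x -> f (bar x), lift it to phi : x -> bar x, and get the cocycle identity bar(phi) phi = 1
   locally by faithfulness; e is then an arrow f(x, phi) -> (y, psi). *)

From Stdlib Require Import ClassicalEpsilon FunctionalExtensionality PropExtensionality ProofIrrelevance.
Set Implicit Arguments.
Unset Strict Implicit.

(** * Germs and stalks *)

Lemma cls_repr (T : Type) (R : T -> T -> Prop) (q : quot R) : cls R (repr q) = q.
Proof.
  destruct q as [P HP]. unfold repr; simpl.
  destruct (constructive_indefinite_description _ HP) as [t Ht]; simpl.
  unfold cls. apply subset_eq_compat. symmetry. exact Ht.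
Qed.

Lemma cls_eq_iff (T : Type) (R : T -> T -> Prop) (Rrefl : forall x, R x x)
    (Rsym : forall x y, R x y -> R y x) (Rtrans : forall x y z, R x y -> R y z -> R x z)
    (a b : T) :
  cls R a = cls R b <-> R a b.
Proof.
  split.
  - intro E. apply (f_equal (@proj1_sig _ _)) in E; simpl in E.
    rewrite E. apply Rrefl.
  - intro Hab. unfold cls. apply subset_eq_compat.
    apply functional_extensionality; intro x. apply propositional_extensionality.
    split; eauto.
Qed.

Definition presheaf_laws (C : Cat) (F : C -> Type) (Fr : forall U V : C, chom V U -> F U -> F V) :=
  (forall U s, Fr U U (cid U) s = s) /\
  (forall U V W (f : chom V U) (g : chom W V) s, Fr U W (ccomp f g) s = Fr V W g (Fr U V f s)).

Section Germs.
Variables (S : Site) (p : Point S).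

Lemma pt_equalize_over U W (u : pt p U) (w : pt p W) (f g : chom W U) :
  ptmap p f w = u -> ptmap p g w = u ->
  exists W' (w' : pt p W') (h : chom W' W), ptmap p h w' = w /\ ccomp f h = ccomp g h.
Proof.
  intros Hf Hg. assert (E : ptmap p f w = ptmap p g w) by congruence.
  destruct (pt_equalize E) as [W' [w' [h [E1 E2]]]]. exists W', w', h. auto.
Qed.

Section GermRelation.
Variables (F : S -> Type) (Fr : forall U V : S, chom V U -> F U -> F V).
Hypothesis HFr : presheaf_laws Fr.
Let Fr_id := proj1 HFr.
Let Fr_comp := proj2 HFr.

Definition germ_at (U : S) (u : pt p U) (s : F U) : germ p F := existT _ U (u, s).

Lemma germ_rel_refl r : germ_rel p Fr r r.
Proof.
  destruct r as [U [u s]]. exists U, u, (cid U), (cid U); simpl.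
  rewrite ptmap_id. auto.
Qed.

Lemma germ_rel_sym r1 r2 : germ_rel p Fr r1 r2 -> germ_rel p Fr r2 r1.
Proof. intros [W [z [f [g [H1 [H2 H3]]]]]]. exists W, z, g, f. auto. Qed.

(* Two refinements of the middle germ are joined by a cone and then equalized. *)
Lemma germ_rel_trans r1 r2 r3 : germ_rel p Fr r1 r2 -> germ_rel p Fr r2 r3 -> germ_rel p Fr r1 r3.
Proof.
  destruct r1 as [U1 [u1 s1]], r2 as [U2 [u2 s2]], r3 as [U3 [u3 s3]]; simpl.
  intros [W1 [z1 [f1 [g1 [A1 [A2 A3]]]]]] [W2 [z2 [f2 [g2 [B1 [B2 B3]]]]]]; simpl in *.
  destruct (pt_cone z1 z2) as [V [v [h1 [h2 [C1 C2]]]]].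
  destruct (@pt_equalize_over _ _ u2 v (ccomp g1 h1) (ccomp f2 h2)) as [V' [v' [k [D1 D2]]]];
    [rewrite !ptmap_comp; congruence | rewrite !ptmap_comp; congruence |].
  exists V', v', (ccomp (ccomp f1 h1) k), (ccomp (ccomp g2 h2) k); simpl.
  split; [rewrite !ptmap_comp; congruence |].
  split; [rewrite !ptmap_comp; congruence |].
  rewrite !Fr_comp, A3, <- !Fr_comp, ccomp_assoc, D2, <- ccomp_assoc, !Fr_comp, B3.
  reflexivity.
Qed.

Lemma cls_germ_eq a b : cls (germ_rel p Fr) a = cls (germ_rel p Fr) b <-> germ_rel p Fr a b.
Proof. apply cls_eq_iff; [apply germ_rel_refl | apply germ_rel_sym | apply germ_rel_trans]. Qed.

Lemma cls_germ_restrict U W (u : pt p U) (w : pt p W) (g : chom W U) s :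
  ptmap p g w = u -> cls (germ_rel p Fr) (germ_at u s) = cls (germ_rel p Fr) (germ_at w (Fr g s)).
Proof.
  intro Hg. apply cls_germ_eq. exists W, w, g, (cid W); simpl.
  rewrite ptmap_id, Fr_id. auto.
Qed.

Lemma cls_germ_eq_locally U (u : pt p U) a b :
  cls (germ_rel p Fr) (germ_at u a) = cls (germ_rel p Fr) (germ_at u b) ->
  exists W (w : pt p W) (g : chom W U), ptmap p g w = u /\ Fr g a = Fr g b.
Proof.
  intro E. apply cls_germ_eq in E. destruct E as [W [z [f [g [H1 [H2 H3]]]]]]; simpl in *.
  destruct (pt_equalize_over H1 H2) as [W' [w' [h [E1 E2]]]].
  exists W', w', (ccomp f h). split; [rewrite !ptmap_comp; congruence |].
  rewrite E2 at 2. rewrite !Fr_comp, H3. reflexivity.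
Qed.

Lemma cls_germ_eq_of_locally U (u : pt p U) W (w : pt p W) (g : chom W U) a b :
  ptmap p g w = u -> Fr g a = Fr g b ->
  cls (germ_rel p Fr) (germ_at u a) = cls (germ_rel p Fr) (germ_at u b).
Proof. intros Hg E. rewrite (cls_germ_restrict a Hg), (cls_germ_restrict b Hg), E. reflexivity. Qed.

Lemma cls_germ_eq2_refine U (u : pt p U) Z (z : pt p Z) (a1 a2 : F Z) (b1 b2 : F U) :
  cls (germ_rel p Fr) (germ_at z a1) = cls (germ_rel p Fr) (germ_at u b1) ->
  cls (germ_rel p Fr) (germ_at z a2) = cls (germ_rel p Fr) (germ_at u b2) ->
  exists V (v : pt p V) (k : chom V Z) (l : chom V U),
    ptmap p k v = z /\ ptmap p l v = u /\ Fr k a1 = Fr l b1 /\ Fr k a2 = Fr l b2.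
Proof.
  intros E1 E2. apply cls_germ_eq in E1. destruct E1 as [V [v [k [l [K [L E1]]]]]]; simpl in *.
  rewrite (cls_germ_restrict a2 K), (cls_germ_restrict b2 L) in E2.
  destruct (cls_germ_eq_locally E2) as [V' [v' [h [H E2']]]].
  exists V', v', (ccomp k h), (ccomp l h).
  split; [rewrite !ptmap_comp; congruence |]. split; [rewrite !ptmap_comp; congruence |].
  rewrite !Fr_comp, E1. auto.
Qed.

Lemma stalk_germ_surj (q : stalk p Fr) :
  exists U (u : pt p U) s, q = cls (germ_rel p Fr) (germ_at u s).
Proof. rewrite <- (cls_repr q). destruct (repr q) as [U [u s]]. exists U, u, s. reflexivity. Qed.

Lemma stalk_germ_surj_over U (u : pt p U) (q : stalk p Fr) :
  exists W (w : pt p W) (g : chom W U) s, ptmap p g w = u /\ q = cls (germ_rel p Fr) (germ_at w s).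
Proof.
  destruct (stalk_germ_surj q) as [U1 [u1 [s1 ->]]].
  destruct (pt_cone u u1) as [W [w [g1 [g2 [H1 H2]]]]].
  exists W, w, g1, (Fr g2 s1). split; auto. apply cls_germ_restrict; auto.
Qed.

End GermRelation.

Lemma stalk_map_germ (F G : S -> Type) (Fr : forall U V : S, chom V U -> F U -> F V)
  (Gr : forall U V : S, chom V U -> G U -> G V)
  (HGr : presheaf_laws Gr)
  (phi : forall U, F U -> G U)
  (phi_nat : forall U V (h : chom V U) s, Gr _ _ h (phi U s) = phi V (Fr _ _ h s))
  U (u : pt p U) s :
  stalk_map p Fr Gr phi (cls (germ_rel p Fr) (germ_at u s)) = cls (germ_rel p Gr) (germ_at u (phi U s)).
Proof.
  unfold stalk_map.
  assert (E := cls_repr (cls (germ_rel p Fr) (germ_at u s))).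
  destruct (repr (cls (germ_rel p Fr) (germ_at u s))) as [U' [u' s']]; simpl.
  apply (f_equal (fun q => proj1_sig q (germ_at u s))) in E; simpl in E.
  assert (Hr : germ_rel p Fr (existT _ U' (u', s')) (germ_at u s)).
  { rewrite E. apply germ_rel_refl. }
  apply (cls_germ_eq HGr).
  destruct Hr as [W [z [f [g [H1 [H2 H3]]]]]]. exists W, z, f, g; simpl in *.
  rewrite !phi_nat, H3. auto.
Qed.

End Germs.

(** * The stalk groupoid *)

Lemma obR_laws (C : Cat) (X : PrePGpd C) (HX : is_pgpd X) : presheaf_laws (obR X).
Proof. split; [apply (res_id_o HX) | apply (res_comp_o HX)]. Qed.

Lemma arR_laws (C : Cat) (X : PrePGpd C) (HX : is_pgpd X) : presheaf_laws (arR X).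
Proof. split; [apply (res_id_a HX) | apply (res_comp_a HX)]. Qed.

Section StalkGroupoid.
Variables (S : Site) (p : Point S) (X : PrePGpd S).
Hypothesis HX : is_pgpd X.

Definition ob_germ U (u : pt p U) (x : Ob (psec X U)) : Ob (stalk_gpd p X) :=
  cls (germ_rel p (obR X)) (germ_at (F := obF X) u x).
Definition arr_germ U (u : pt p U) (a : Arr (psec X U)) : Arr (stalk_gpd p X) :=
  cls (germ_rel p (arR X)) (germ_at (F := arF X) u a).

Lemma ob_germ_restrict U W (u : pt p U) (w : pt p W) (g : chom W U) x :
  ptmap p g w = u -> ob_germ u x = ob_germ w (fo (pres X g) x).
Proof. apply (cls_germ_restrict (obR_laws HX)). Qed.
Lemma arr_germ_restrict U W (u : pt p U) (w : pt p W) (g : chom W U) a :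
  ptmap p g w = u -> arr_germ u a = arr_germ w (fa (pres X g) a).
Proof. apply (cls_germ_restrict (arR_laws HX)). Qed.

Lemma ob_germ_eq_locally U (u : pt p U) x y : ob_germ u x = ob_germ u y ->
  exists W (w : pt p W) (g : chom W U), ptmap p g w = u /\ fo (pres X g) x = fo (pres X g) y.
Proof. apply (cls_germ_eq_locally (obR_laws HX)). Qed.
Lemma arr_germ_eq_locally U (u : pt p U) a b : arr_germ u a = arr_germ u b ->
  exists W (w : pt p W) (g : chom W U), ptmap p g w = u /\ fa (pres X g) a = fa (pres X g) b.
Proof. apply (cls_germ_eq_locally (arR_laws HX)). Qed.

Lemma arr_germ_eq_of_locally U (u : pt p U) W (w : pt p W) (g : chom W U) a b :
  ptmap p g w = u -> fa (pres X g) a = fa (pres X g) b -> arr_germ u a = arr_germ u b.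
Proof. apply (cls_germ_eq_of_locally (arR_laws HX)). Qed.

Lemma ob_germ_surj (q : Ob (stalk_gpd p X)) : exists U (u : pt p U) x, q = ob_germ u x.
Proof. apply stalk_germ_surj. Qed.
Lemma arr_germ_surj (q : Arr (stalk_gpd p X)) : exists U (u : pt p U) a, q = arr_germ u a.
Proof. apply stalk_germ_surj. Qed.

Lemma ob_germ_surj_over U (u : pt p U) (q : Ob (stalk_gpd p X)) :
  exists W (w : pt p W) (g : chom W U) x, ptmap p g w = u /\ q = ob_germ w x.
Proof. apply (stalk_germ_surj_over (obR_laws HX)). Qed.
Lemma arr_germ_surj_over U (u : pt p U) (q : Arr (stalk_gpd p X)) :
  exists W (w : pt p W) (g : chom W U) a, ptmap p g w = u /\ q = arr_germ w a.
Proof. apply (stalk_germ_surj_over (arR_laws HX)). Qed.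

Lemma stalk_src_germ U (u : pt p U) a : src (arr_germ u a) = ob_germ u (src a).
Proof.
  apply (stalk_map_germ (Fr := arR X) (obR_laws HX)). intros. symmetry. apply (fun_src (res_fun HX h)).
Qed.
Lemma stalk_tgt_germ U (u : pt p U) a : tgt (arr_germ u a) = ob_germ u (tgt a).
Proof.
  apply (stalk_map_germ (Fr := arR X) (obR_laws HX)). intros. symmetry. apply (fun_tgt (res_fun HX h)).
Qed.
Lemma stalk_idg_germ U (u : pt p U) x : idg (ob_germ u x) = arr_germ u (idg x).
Proof. apply (stalk_map_germ (Fr := obR X) (arR_laws HX)). intros. apply (fun_id (res_fun HX h)). Qed.

Lemma stalk_cmp_germ U (u : pt p U) (a b : Arr (psec X U)) :
  src b = tgt a -> cmp (arr_germ u b) (arr_germ u a) = arr_germ u (cmp b a).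
Proof.
  intro Hc. simpl. unfold stalk_cmp.
  generalize (cls_repr (arr_germ u a)) (cls_repr (arr_germ u b)).
  destruct (repr (arr_germ u a)) as [Ua [ua sa]], (repr (arr_germ u b)) as [Ub [ub sb]]; simpl.
  intros Ea Eb. change (arr_germ ua sa = arr_germ u a) in Ea. change (arr_germ ub sb = arr_germ u b) in Eb.
  destruct (excluded_middle_informative _) as [Hex | Hnex].
  - destruct (constructive_indefinite_description _ Hex) as [[W [[z f1] f2]] [T1 [T2 T3]]]; simpl in *.
    rewrite (arr_germ_restrict sa T1) in Ea. rewrite (arr_germ_restrict sb T2) in Eb.
    destruct (cls_germ_eq2_refine (arR_laws HX) Ea Eb) as [V [v [k [l [K [L [Ka Kb]]]]]]].
    change (arr_germ z (cmp (fa (pres X f2) sb) (fa (pres X f1) sa)) = arr_germ u (cmp b a)).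
    rewrite (arr_germ_restrict _ K), (arr_germ_restrict _ L).
    rewrite (fun_cmp (res_fun HX k)) by exact T3. rewrite (fun_cmp (res_fun HX l)) by exact Hc.
    unfold arR in Ka, Kb. rewrite Ka, Kb. reflexivity.
  - (* impossible: refine [ua] so that [sa] becomes [a], then [ub] so that [sb] becomes [b] *)
    exfalso. apply Hnex.
    apply (cls_germ_eq (arR_laws HX)) in Ea. destruct Ea as [V1 [v1 [k1 [l1 [K1 [L1 Ea]]]]]]; simpl in *.
    rewrite (arr_germ_restrict b L1) in Eb.
    apply (cls_germ_eq (arR_laws HX)) in Eb. destruct Eb as [V2 [v2 [k2 [l2 [K2 [L2 Eb]]]]]]; simpl in *.
    exists (existT _ V2 (v2, ccomp k1 l2, k2)); simpl.
    split; [rewrite !ptmap_comp; congruence |]. split; [exact K2 |].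
    unfold arR in Ea, Eb. rewrite Eb, (res_comp_a HX), Ea.
    rewrite (fun_src (res_fun HX _)), (fun_tgt (res_fun HX _)), (fun_src (res_fun HX _)),
      (fun_tgt (res_fun HX _)), Hc.
    reflexivity.
Qed.

Lemma arr_germs_common_stage (q1 q2 : Arr (stalk_gpd p X)) :
  exists U (u : pt p U) a1 a2, q1 = arr_germ u a1 /\ q2 = arr_germ u a2.
Proof.
  destruct (arr_germ_surj q1) as [U [u [a1 ->]]].
  destruct (arr_germ_surj_over u q2) as [W [w [g [a2 [G ->]]]]].
  exists W, w, (fa (pres X g) a1), a2. rewrite <- (arr_germ_restrict a1 G). auto.
Qed.

Lemma composable_germs_locally U (u : pt p U) (b a : Arr (psec X U)) :
  src (arr_germ u b) = tgt (arr_germ u a) ->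
  exists W (w : pt p W) (g : chom W U), ptmap p g w = u /\ src (fa (pres X g) b) = tgt (fa (pres X g) a).
Proof.
  rewrite stalk_src_germ, stalk_tgt_germ. intro E.
  destruct (ob_germ_eq_locally E) as [W [w [g [G E']]]].
  exists W, w, g. rewrite (fun_src (res_fun HX g)), (fun_tgt (res_fun HX g)). auto.
Qed.

Lemma stalk_composable_pair (b a : Arr (stalk_gpd p X)) : src b = tgt a ->
  exists U (u : pt p U) b0 a0, b = arr_germ u b0 /\ a = arr_germ u a0 /\ src b0 = tgt a0.
Proof.
  intro E. destruct (arr_germs_common_stage b a) as [U [u [b0 [a0 [-> ->]]]]].
  destruct (composable_germs_locally E) as [W [w [g [G E']]]].
  exists W, w, (fa (pres X g) b0), (fa (pres X g) a0).
  rewrite <- !(arr_germ_restrict _ G). auto.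
Qed.

Lemma stalk_composable_triple (c b a : Arr (stalk_gpd p X)) : src c = tgt b -> src b = tgt a ->
  exists U (u : pt p U) c0 b0 a0, c = arr_germ u c0 /\ b = arr_germ u b0 /\ a = arr_germ u a0 /\
    src c0 = tgt b0 /\ src b0 = tgt a0.
Proof.
  intros Ecb Eba. destruct (stalk_composable_pair Ecb) as [U [u [c0 [b0 [-> [-> E1]]]]]].
  destruct (arr_germ_surj_over u a) as [W [w [g [a0 [G ->]]]]].
  rewrite (arr_germ_restrict b0 G) in Eba.
  destruct (composable_germs_locally Eba) as [W' [w' [h [H E2]]]].
  exists W', w', (fa (pres X h) (fa (pres X g) c0)), (fa (pres X h) (fa (pres X g) b0)), (fa (pres X h) a0).
  rewrite <- !(arr_germ_restrict _ H), <- !(arr_germ_restrict _ G).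
  repeat split; auto.
  rewrite (fun_src (res_fun HX h)), (fun_tgt (res_fun HX h)),
    (fun_src (res_fun HX g)), (fun_tgt (res_fun HX g)), E1.
  reflexivity.
Qed.

Lemma stalk_is_gpd : is_gpd (stalk_gpd p X).
Proof.
  constructor.
  - intro x. destruct (ob_germ_surj x) as [U [u [x0 ->]]].
    rewrite stalk_idg_germ, stalk_src_germ, (src_id (sec_gpd HX U)). reflexivity.
  - intro x. destruct (ob_germ_surj x) as [U [u [x0 ->]]].
    rewrite stalk_idg_germ, stalk_tgt_germ, (tgt_id (sec_gpd HX U)). reflexivity.
  - intros g f H. destruct (stalk_composable_pair H) as [U [u [b [a [-> [-> E]]]]]].
    rewrite stalk_cmp_germ by exact E. rewrite !stalk_src_germ, (src_cmp (sec_gpd HX U) E). reflexivity.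
  - intros g f H. destruct (stalk_composable_pair H) as [U [u [b [a [-> [-> E]]]]]].
    rewrite stalk_cmp_germ by exact E. rewrite !stalk_tgt_germ, (tgt_cmp (sec_gpd HX U) E). reflexivity.
  - intro f. destruct (arr_germ_surj f) as [U [u [a ->]]].
    rewrite stalk_tgt_germ, stalk_idg_germ, stalk_cmp_germ by apply (src_id (sec_gpd HX U)).
    rewrite (cmp_id_l (sec_gpd HX U)). reflexivity.
  - intro f. destruct (arr_germ_surj f) as [U [u [a ->]]].
    rewrite stalk_src_germ, stalk_idg_germ, stalk_cmp_germ by (symmetry; apply (tgt_id (sec_gpd HX U))).
    rewrite (cmp_id_r (sec_gpd HX U)). reflexivity.
  - intros h g f H1 H2.
    destruct (stalk_composable_triple H1 H2) as [U [u [c [b [a [-> [-> [-> [E1 E2]]]]]]]]].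
    rewrite !stalk_cmp_germ; auto.
    + rewrite (cmp_assoc (sec_gpd HX U)); auto.
    + rewrite (src_cmp (sec_gpd HX U)); auto.
    + rewrite (tgt_cmp (sec_gpd HX U)); auto.
  - intro f. destruct (arr_germ_surj f) as [U [u [a ->]]].
    destruct (has_inv (sec_gpd HX U) a) as [b [B1 [B2 [B3 B4]]]].
    exists (arr_germ u b). rewrite !stalk_src_germ, !stalk_tgt_germ, !stalk_cmp_germ by auto.
    rewrite B1, B2, B3, B4, !stalk_idg_germ. auto.
Qed.

End StalkGroupoid.

Section StalkFunctor.
Variables (S : Site) (p : Point S) (X Y : PrePGpd S) (f : PreMor X Y).
Hypotheses (HX : is_pgpd X) (HY : is_pgpd Y) (Hf : is_mor f).

Lemma stalk_fun_ob_germ U (u : pt p U) x : fo (stalk_fun p f) (ob_germ u x) = ob_germ u (fo (mc f U) x).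
Proof. apply (stalk_map_germ (Fr := obR X) (obR_laws HY)). intros. apply (mor_nat_o Hf). Qed.
Lemma stalk_fun_arr_germ U (u : pt p U) a : fa (stalk_fun p f) (arr_germ u a) = arr_germ u (fa (mc f U) a).
Proof. apply (stalk_map_germ (Fr := arR X) (arR_laws HY)). intros. apply (mor_nat_a Hf). Qed.

Lemma stalk_fun_is_fun : is_fun (stalk_fun p f).
Proof.
  constructor.
  - intro a. destruct (arr_germ_surj a) as [U [u [a0 ->]]].
    rewrite stalk_fun_arr_germ, !(stalk_src_germ HY), (stalk_src_germ HX), stalk_fun_ob_germ,
      (fun_src (mor_fun Hf U)).
    reflexivity.
  - intro a. destruct (arr_germ_surj a) as [U [u [a0 ->]]].
    rewrite stalk_fun_arr_germ, !(stalk_tgt_germ HY), (stalk_tgt_germ HX), stalk_fun_ob_germ,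
      (fun_tgt (mor_fun Hf U)).
    reflexivity.
  - intro x. destruct (ob_germ_surj x) as [U [u [x0 ->]]].
    rewrite (stalk_idg_germ HX), stalk_fun_arr_germ, stalk_fun_ob_germ, (stalk_idg_germ HY),
      (fun_id (mor_fun Hf U)).
    reflexivity.
  - intros g a H. destruct (stalk_composable_pair HX H) as [U [u [b0 [a0 [-> [-> E]]]]]].
    rewrite (stalk_cmp_germ HX) by exact E. rewrite !stalk_fun_arr_germ, (stalk_cmp_germ HY).
    + rewrite (fun_cmp (mor_fun Hf U) E). reflexivity.
    + rewrite (fun_src (mor_fun Hf U)), (fun_tgt (mor_fun Hf U)), E. reflexivity.
Qed.

End StalkFunctor.

(** * Equivalences of groupoids *)

Section GroupoidInverse.
Variable G : PreGpd.
Hypothesis HG : is_gpd G.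

Definition ginv (a : Arr G) : Arr G := proj1_sig (constructive_indefinite_description _ (has_inv HG a)).

Lemma ginv_spec (a : Arr G) : src (ginv a) = tgt a /\ tgt (ginv a) = src a /\
  cmp (ginv a) a = idg (src a) /\ cmp a (ginv a) = idg (tgt a).
Proof. unfold ginv. destruct (constructive_indefinite_description _ _) as [b Hb]. exact Hb. Qed.

Lemma ginv_src (a : Arr G) : src (ginv a) = tgt a. Proof. apply ginv_spec. Qed.
Lemma ginv_tgt (a : Arr G) : tgt (ginv a) = src a. Proof. apply ginv_spec. Qed.
Lemma cmp_ginv_l (a : Arr G) : cmp (ginv a) a = idg (src a). Proof. apply ginv_spec. Qed.
Lemma cmp_ginv_r (a : Arr G) : cmp a (ginv a) = idg (tgt a). Proof. apply ginv_spec. Qed.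

End GroupoidInverse.

(* Proves equations between sources and targets with the groupoid and functor laws of every
   [is_gpd]/[is_fun] hypothesis in the context, including families indexed by stages;
   [simp] adds problem-specific rewriting. *)
Ltac endpoints_with simp :=
  repeat first
    [ progress simp
    | match goal with
      | H : is_gpd _ |- _ => progress rewrite ?(src_id H), ?(tgt_id H), ?(ginv_src H), ?(ginv_tgt H)
      | H : is_fun _ |- _ => progress rewrite ?(fun_src H), ?(fun_tgt H)
      | H : forall _, is_gpd _ |- _ =>
          progress rewrite ?(src_id (@H _)), ?(tgt_id (@H _)), ?(ginv_src (@H _)), ?(ginv_tgt (@H _))
      | H : forall _, is_fun _ |- _ => progress rewrite ?(fun_src (@H _)), ?(fun_tgt (@H _))
      | H : forall _ _ _, is_fun _ |- _ => progress rewrite ?(fun_src (@H _ _ _)), ?(fun_tgt (@H _ _ _))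
      | H : is_gpd _ |- _ => rewrite (src_cmp H) by endpoints_with simp
      | H : is_gpd _ |- _ => rewrite (tgt_cmp H) by endpoints_with simp
      | H : forall _, is_gpd _ |- _ => rewrite (src_cmp (@H _)) by endpoints_with simp
      | H : forall _, is_gpd _ |- _ => rewrite (tgt_cmp (@H _)) by endpoints_with simp
      end ];
  congruence.

Ltac endpoints := endpoints_with fail.

Section GroupoidFacts.
Variable G : PreGpd.
Hypothesis HG : is_gpd G.

Lemma cmp_idg_l (f : Arr G) x : tgt f = x -> cmp (idg x) f = f.
Proof. intros <-. apply (cmp_id_l HG). Qed.
Lemma cmp_idg_r (f : Arr G) x : src f = x -> cmp f (idg x) = f.
Proof. intros <-. apply (cmp_id_r HG). Qed.

Lemma cmp_ginv_rK (e a : Arr G) : tgt a = tgt e -> cmp e (cmp (ginv HG e) a) = a.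
Proof.
  intro H. rewrite (cmp_assoc HG) by endpoints.
  rewrite (cmp_ginv_r HG). apply cmp_idg_l. auto.
Qed.

Lemma cmp_ginv_lK (e a : Arr G) : tgt a = src e -> cmp (ginv HG e) (cmp e a) = a.
Proof.
  intro H. rewrite (cmp_assoc HG) by endpoints.
  rewrite (cmp_ginv_l HG). apply cmp_idg_l. auto.
Qed.

Lemma cmp_cancel_l (g f f' : Arr G) : src g = tgt f -> tgt f' = tgt f -> cmp g f = cmp g f' -> f = f'.
Proof.
  intros H1 H2 E.
  rewrite <- (cmp_ginv_lK (eq_sym H1)), <- (cmp_ginv_lK (e := g) (a := f')) by congruence.
  congruence.
Qed.

Lemma cmp_cancel_r (g g' f : Arr G) : src g = tgt f -> src g' = tgt f -> cmp g f = cmp g' f -> g = g'.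
Proof.
  intros H1 H2 E.
  rewrite <- (cmp_idg_r H1), <- (cmp_idg_r H2), <- (cmp_ginv_r HG f).
  rewrite !(cmp_assoc HG) by endpoints. congruence.
Qed.

End GroupoidFacts.

Definition faithful (G H : PreGpd) (F : PreFun G H) : Prop :=
  forall a b, src a = src b -> tgt a = tgt b -> fa F a = fa F b -> a = b.
Definition full (G H : PreGpd) (F : PreFun G H) : Prop :=
  forall x x1 b, src b = fo F x -> tgt b = fo F x1 ->
    exists a, src a = x /\ tgt a = x1 /\ fa F a = b.
Definition ess_surj (G H : PreGpd) (F : PreFun G H) : Prop :=
  forall y, exists x e, src e = fo F x /\ tgt e = y.

Section EquivalenceIsFullyFaithful.
Variables (G H : PreGpd) (F : PreFun G H) (K : PreFun H G)
  (eta : Ob G -> Arr G) (eps : Ob H -> Arr H).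
Hypotheses (HG : is_gpd G) (HH : is_gpd H) (HF : is_fun F) (HK : is_fun K)
  (Heta : nat_iso (idF G) (compF K F) eta) (Heps : nat_iso (compF F K) (idF H) eps).

Let eta_src x : src (eta x) = x := proj1 (proj1 Heta x).
Let eta_tgt x : tgt (eta x) = fo K (fo F x) := proj1 (proj2 (proj1 Heta x)).
Let eta_nat a : cmp (eta (tgt a)) a = cmp (fa K (fa F a)) (eta (src a)) := proj2 Heta a.
Let eps_src y : src (eps y) = fo F (fo K y) := proj1 (proj1 Heps y).
Let eps_tgt y : tgt (eps y) = y := proj1 (proj2 (proj1 Heps y)).
Let eps_nat b : cmp (eps (tgt b)) (fa F (fa K b)) = cmp b (eps (src b)) := proj2 Heps b.

Ltac unit_endpoints := endpoints_with ltac:(rewrite ?eta_src, ?eta_tgt, ?eps_src, ?eps_tgt).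

Lemma equivalence_ess_surj : ess_surj F.
Proof. intro y. exists (fo K y), (eps y). auto. Qed.

Lemma equivalence_faithful : faithful F.
Proof.
  intros a b E1 E2 E3. apply (cmp_cancel_l HG (g := eta (tgt a))); [unit_endpoints | unit_endpoints |].
  rewrite (eta_nat a), E2, (eta_nat b), E3, E1. reflexivity.
Qed.

Let quasi_inverse_faithful : faithful K.
Proof.
  intros c d E1 E2 E3. apply (cmp_cancel_r HH (f := eps (src c))); [unit_endpoints | unit_endpoints |].
  rewrite <- (eps_nat c), E1, <- (eps_nat d), E2, E3. reflexivity.
Qed.

(* The preimage of [b : F x -> F x1] is [eta x1^-1 . K b . eta x]; since K is faithful it
   suffices to compare images under K, where naturality of [eta] applies. *)
Lemma equivalence_full : full F.
Proof.
  intros x x1 b E1 E2.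
  set (a := cmp (ginv HG (eta x1)) (cmp (fa K b) (eta x))).
  assert (Sa : src a = x) by (unfold a; unit_endpoints).
  assert (Ta : tgt a = x1) by (unfold a; unit_endpoints).
  exists a. split; [exact Sa | split; [exact Ta |]].
  apply quasi_inverse_faithful; [unit_endpoints | unit_endpoints |].
  apply (cmp_cancel_r HG (f := eta x)); [unit_endpoints | unit_endpoints |].
  rewrite <- Sa at 1. rewrite <- eta_nat, Ta. unfold a.
  apply (cmp_ginv_rK HG). unit_endpoints.
Qed.

End EquivalenceIsFullyFaithful.

Section FullyFaithfulIsEquivalence.
Variables (G H : PreGpd) (F : PreFun G H).
Hypotheses (HG : is_gpd G) (HH : is_gpd H) (HF : is_fun F)
  (Hfaithful : faithful F) (Hfull : full F) (Hess : ess_surj F).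

Definition preimage_ob (y : Ob H) : Ob G := proj1_sig (constructive_indefinite_description _ (Hess y)).
Definition preimage_iso (y : Ob H) : Arr H :=
  proj1_sig (constructive_indefinite_description _
    (proj2_sig (constructive_indefinite_description _ (Hess y)))).

Lemma preimage_iso_spec y : src (preimage_iso y) = fo F (preimage_ob y) /\ tgt (preimage_iso y) = y.
Proof.
  unfold preimage_iso, preimage_ob. destruct (constructive_indefinite_description _ (Hess y)) as [x Hx]; simpl.
  destruct (constructive_indefinite_description _ Hx) as [e He]. exact He.
Qed.
Let preimage_iso_src y := proj1 (preimage_iso_spec y).
Let preimage_iso_tgt y := proj2 (preimage_iso_spec y).

Definition is_lift (x x1 : Ob G) (b : Arr H) (a : Arr G) : Prop := src a = x /\ tgt a = x1 /\ fa F a = b.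
Definition lift (x x1 : Ob G) (b : Arr H) : Arr G := epsilon (inhabits (idg x)) (is_lift x x1 b).

Lemma lift_spec x x1 b : src b = fo F x -> tgt b = fo F x1 -> is_lift x x1 b (lift x x1 b).
Proof. intros H1 H2. unfold lift. apply epsilon_spec. apply Hfull; auto. Qed.

Definition preimage_arr (b : Arr H) : Arr G :=
  lift (preimage_ob (src b)) (preimage_ob (tgt b))
    (cmp (ginv HH (preimage_iso (tgt b))) (cmp b (preimage_iso (src b)))).
Definition quasi_inverse : PreFun H G := {| fo := preimage_ob; fa := preimage_arr |}.
Definition unit_arr (x : Ob G) : Arr G :=
  lift x (preimage_ob (fo F x)) (ginv HH (preimage_iso (fo F x))).

Lemma preimage_arr_spec b :
  is_lift (preimage_ob (src b)) (preimage_ob (tgt b))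
    (cmp (ginv HH (preimage_iso (tgt b))) (cmp b (preimage_iso (src b)))) (preimage_arr b).
Proof. apply lift_spec; endpoints_with ltac:(rewrite ?preimage_iso_src, ?preimage_iso_tgt). Qed.
Let preimage_arr_src b := proj1 (preimage_arr_spec b).
Let preimage_arr_tgt b := proj1 (proj2 (preimage_arr_spec b)).
Let preimage_arr_image b := proj2 (proj2 (preimage_arr_spec b)).

Lemma unit_arr_spec x : is_lift x (preimage_ob (fo F x)) (ginv HH (preimage_iso (fo F x))) (unit_arr x).
Proof. apply lift_spec; endpoints_with ltac:(rewrite ?preimage_iso_src, ?preimage_iso_tgt). Qed.
Let unit_arr_src x := proj1 (unit_arr_spec x).
Let unit_arr_tgt x := proj1 (proj2 (unit_arr_spec x)).
Let unit_arr_image x := proj2 (proj2 (unit_arr_spec x)).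

Ltac qi_endpoints := endpoints_with ltac:(rewrite ?preimage_iso_src, ?preimage_iso_tgt,
  ?preimage_arr_src, ?preimage_arr_tgt, ?unit_arr_src, ?unit_arr_tgt).

Lemma quasi_inverse_is_fun : is_fun quasi_inverse.
Proof.
  constructor; simpl.
  - apply preimage_arr_src.
  - apply preimage_arr_tgt.
  - intro y. apply Hfaithful; [qi_endpoints | qi_endpoints |].
    rewrite preimage_arr_image, (fun_id HF), (src_id HH), (tgt_id HH).
    rewrite (cmp_idg_l HH) by qi_endpoints. rewrite (cmp_ginv_l HH). f_equal. qi_endpoints.
  - intros g f Hc. apply Hfaithful; [qi_endpoints | qi_endpoints |].
    rewrite (fun_cmp HF) by qi_endpoints. rewrite !preimage_arr_image.
    rewrite <- !(cmp_assoc HH) by qi_endpoints.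
    rewrite (tgt_cmp HH Hc), (src_cmp HH Hc), Hc, (cmp_ginv_rK HH) by qi_endpoints. reflexivity.
Qed.

Lemma unit_nat_iso : nat_iso (idF G) (compF quasi_inverse F) unit_arr.
Proof.
  split.
  - intro x. simpl. split; [apply unit_arr_src |]. split; [apply unit_arr_tgt | apply (has_inv HG)].
  - intro a. simpl. apply Hfaithful; [qi_endpoints | qi_endpoints |].
    rewrite !(fun_cmp HF) by qi_endpoints. rewrite preimage_arr_image, !unit_arr_image.
    rewrite <- !(cmp_assoc HH) by qi_endpoints.
    rewrite (fun_src HF), (fun_tgt HF), (cmp_ginv_r HH), (cmp_idg_r HH) by qi_endpoints. reflexivity.
Qed.

Lemma counit_nat_iso : nat_iso (compF F quasi_inverse) (idF H) preimage_iso.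
Proof.
  split.
  - intro y. simpl. split; [apply preimage_iso_src |]. split; [apply preimage_iso_tgt | apply (has_inv HH)].
  - intro b. simpl. rewrite preimage_arr_image, (cmp_ginv_rK HH) by qi_endpoints. reflexivity.
Qed.

Lemma fully_faithful_ess_surj_equivalence : is_equivalence F.
Proof.
  exists quasi_inverse, unit_arr, preimage_iso.
  split; [apply quasi_inverse_is_fun | split; [apply unit_nat_iso | apply counit_nat_iso]].
Qed.

End FullyFaithfulIsEquivalence.

(** * Local criteria on stalks *)

Definition locally_faithful (S : Site) (p : Point S) (X Y : PrePGpd S) (f : PreMor X Y) : Prop :=
  forall U (u : pt p U) (a b : Arr (psec X U)), src a = src b -> tgt a = tgt b ->
    fa (mc f U) a = fa (mc f U) b ->
    exists W (w : pt p W) (g : chom W U), ptmap p g w = u /\ fa (pres X g) a = fa (pres X g) b.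
Definition locally_full (S : Site) (p : Point S) (X Y : PrePGpd S) (f : PreMor X Y) : Prop :=
  forall U (u : pt p U) (x x1 : Ob (psec X U)) (b : Arr (psec Y U)),
    src b = fo (mc f U) x -> tgt b = fo (mc f U) x1 ->
    exists W (w : pt p W) (g : chom W U) (a : Arr (psec X W)), ptmap p g w = u /\
      src a = fo (pres X g) x /\ tgt a = fo (pres X g) x1 /\ fa (mc f W) a = fa (pres Y g) b.
Definition locally_ess_surj (S : Site) (p : Point S) (X Y : PrePGpd S) (f : PreMor X Y) : Prop :=
  forall U (u : pt p U) (y : Ob (psec Y U)),
    exists W (w : pt p W) (g : chom W U) (x : Ob (psec X W)) (e : Arr (psec Y W)),
      ptmap p g w = u /\ src e = fo (mc f W) x /\ tgt e = fo (pres Y g) y.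

Section StalkFunctorLocally.
Variables (S : Site) (p : Point S) (X Y : PrePGpd S) (f : PreMor X Y).
Hypotheses (HX : is_pgpd X) (HY : is_pgpd Y) (Hf : is_mor f).

Let ob_germ_eq_restrict (Z : PrePGpd S) (HZ : is_pgpd Z) U (u : pt p U) W (w : pt p W) (g : chom W U) x y :
  ptmap p g w = u -> ob_germ u x = ob_germ u y -> ob_germ w (fo (pres Z g) x) = ob_germ w (fo (pres Z g) y).
Proof. intros G E. rewrite <- !(ob_germ_restrict HZ _ G). exact E. Qed.
Let arr_germ_eq_restrict (Z : PrePGpd S) (HZ : is_pgpd Z) U (u : pt p U) W (w : pt p W) (g : chom W U) a b :
  ptmap p g w = u -> arr_germ u a = arr_germ u b -> arr_germ w (fa (pres Z g) a) = arr_germ w (fa (pres Z g) b).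
Proof. intros G E. rewrite <- !(arr_germ_restrict HZ _ G). exact E. Qed.

Lemma stalk_faithful_locally : faithful (stalk_fun p f) -> locally_faithful p f.
Proof.
  intros H U u a b E1 E2 E3. apply (arr_germ_eq_locally HX). apply H.
  - rewrite !(stalk_src_germ HX), E1. reflexivity.
  - rewrite !(stalk_tgt_germ HX), E2. reflexivity.
  - rewrite !(stalk_fun_arr_germ HY Hf), E3. reflexivity.
Qed.

Lemma locally_faithful_stalk : locally_faithful p f -> faithful (stalk_fun p f).
Proof.
  intros H a b E1 E2 E3. destruct (arr_germs_common_stage HX a b) as [U [u [a0 [b0 [-> ->]]]]].
  rewrite !(stalk_src_germ HX) in E1. rewrite !(stalk_tgt_germ HX) in E2.
  rewrite !(stalk_fun_arr_germ HY Hf) in E3.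
  destruct (ob_germ_eq_locally HX E1) as [W1 [w1 [k1 [K1 F1]]]].
  apply (ob_germ_eq_restrict HX K1), (ob_germ_eq_locally HX) in E2.
  destruct E2 as [W2 [w2 [k2 [K2 F2]]]].
  apply (arr_germ_eq_restrict HY K1), (arr_germ_eq_restrict HY K2), (arr_germ_eq_locally HY) in E3.
  destruct E3 as [W3 [w3 [k3 [K3 F3]]]].
  set (k := ccomp k1 (ccomp k2 k3)).
  destruct (H W3 w3 (fa (pres X k) a0) (fa (pres X k) b0)) as [W4 [w4 [k4 [K4 F4]]]].
  - unfold k. rewrite !(fun_src (res_fun HX _)), !(res_comp_o HX), F1. reflexivity.
  - unfold k. rewrite !(fun_tgt (res_fun HX _)), !(res_comp_o HX), F2. reflexivity.
  - unfold k. rewrite !(res_comp_a HX), <- !(mor_nat_a Hf), F3. reflexivity.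
  - apply (arr_germ_eq_of_locally HX (g := ccomp k k4) (w := w4)).
    + unfold k. rewrite !ptmap_comp. congruence.
    + rewrite !(res_comp_a HX _ k4). exact F4.
Qed.

Lemma stalk_full_locally : full (stalk_fun p f) -> locally_full p f.
Proof.
  intros H U u x x1 b E1 E2.
  destruct (H (ob_germ u x) (ob_germ u x1) (arr_germ u b)) as [a [A1 [A2 A3]]].
  - rewrite (stalk_src_germ HY), (stalk_fun_ob_germ HY Hf), E1. reflexivity.
  - rewrite (stalk_tgt_germ HY), (stalk_fun_ob_germ HY Hf), E2. reflexivity.
  - destruct (arr_germ_surj_over HX u a) as [V [v [g [a0 [G ->]]]]].
    rewrite (stalk_src_germ HX), (ob_germ_restrict HX x G) in A1.
    rewrite (stalk_tgt_germ HX), (ob_germ_restrict HX x1 G) in A2.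
    rewrite (stalk_fun_arr_germ HY Hf), (arr_germ_restrict HY b G) in A3.
    destruct (ob_germ_eq_locally HX A1) as [W1 [w1 [k1 [K1 F1]]]].
    apply (ob_germ_eq_restrict HX K1), (ob_germ_eq_locally HX) in A2.
    destruct A2 as [W2 [w2 [k2 [K2 F2]]]].
    apply (arr_germ_eq_restrict HY K1), (arr_germ_eq_restrict HY K2), (arr_germ_eq_locally HY) in A3.
    destruct A3 as [W3 [w3 [k3 [K3 F3]]]].
    exists W3, w3, (ccomp g (ccomp k1 (ccomp k2 k3))), (fa (pres X (ccomp k1 (ccomp k2 k3))) a0).
    split; [rewrite !ptmap_comp; congruence |].
    rewrite !(res_comp_o HX), !(res_comp_a HX), !(res_comp_a HY).
    rewrite !(fun_src (res_fun HX _)), F1, !(fun_tgt (res_fun HX _)), F2.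
    split; [reflexivity | split; [reflexivity |]].
    rewrite <- !(mor_nat_a Hf). exact F3.
Qed.

Lemma locally_full_stalk : locally_full p f -> full (stalk_fun p f).
Proof.
  intros H x x1 b Hs Ht.
  destruct (ob_germ_surj x) as [U [u [x0 ->]]].
  destruct (ob_germ_surj_over HX u x1) as [U1 [u1 [g1 [x10 [G1 ->]]]]].
  destruct (arr_germ_surj_over HY u1 b) as [V [v [g2 [b0 [G2 ->]]]]].
  assert (G3 : ptmap p (ccomp g1 g2) v = u) by (rewrite !ptmap_comp; congruence).
  rewrite (ob_germ_restrict HX x0 G3), (ob_germ_restrict HX x10 G2) in *.
  set (x0' := fo (pres X (ccomp g1 g2)) x0) in *. set (x10' := fo (pres X g2) x10) in *.
  rewrite (stalk_src_germ HY), (stalk_fun_ob_germ HY Hf) in Hs.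
  rewrite (stalk_tgt_germ HY), (stalk_fun_ob_germ HY Hf) in Ht.
  destruct (ob_germ_eq_locally HY Hs) as [W1 [w1 [k1 [K1 F1]]]].
  apply (ob_germ_eq_restrict HY K1), (ob_germ_eq_locally HY) in Ht.
  destruct Ht as [W2 [w2 [k2 [K2 F2]]]].
  destruct (H W2 w2 (fo (pres X (ccomp k1 k2)) x0') (fo (pres X (ccomp k1 k2)) x10')
     (fa (pres Y (ccomp k1 k2)) b0)) as [W3 [w3 [g3 [a [L1 [L2 [L3 L4]]]]]]].
  - rewrite (fun_src (res_fun HY _)), (res_comp_o HY), F1, <- (res_comp_o HY), (mor_nat_o Hf). reflexivity.
  - rewrite (fun_tgt (res_fun HY _)), (res_comp_o HY), F2, <- (res_comp_o HY), (mor_nat_o Hf). reflexivity.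
  - assert (K : ptmap p (ccomp (ccomp k1 k2) g3) w3 = v) by (rewrite !ptmap_comp; congruence).
    exists (arr_germ w3 a). split; [| split].
    + rewrite (stalk_src_germ HX), L2, (ob_germ_restrict HX x0' K), !(res_comp_o HX). reflexivity.
    + rewrite (stalk_tgt_germ HX), L3, (ob_germ_restrict HX x10' K), !(res_comp_o HX). reflexivity.
    + rewrite (stalk_fun_arr_germ HY Hf), L4, (arr_germ_restrict HY b0 K), !(res_comp_a HY). reflexivity.
Qed.

Lemma stalk_ess_surj_locally : ess_surj (stalk_fun p f) -> locally_ess_surj p f.
Proof.
  intros H U u y.
  destruct (H (ob_germ u y)) as [x [e [E1 E2]]].
  destruct (ob_germ_surj x) as [V [v [x0 ->]]].
  destruct (arr_germ_surj_over HY v e) as [W [w [g [e0 [G ->]]]]].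
  rewrite (stalk_src_germ HY), (stalk_fun_ob_germ HY Hf), (ob_germ_restrict HY _ G) in E1.
  rewrite (stalk_tgt_germ HY) in E2.
  destruct (ob_germ_eq_locally HY E1) as [W1 [w1 [k1 [K1 F1]]]].
  rewrite (ob_germ_restrict HY _ K1) in E2.
  apply (cls_germ_eq (obR_laws HY)) in E2. destruct E2 as [V2 [v2 [k [l [L1 [L2 L3]]]]]]; simpl in *.
  exists V2, v2, l, (fo (pres X (ccomp k1 k)) (fo (pres X g) x0)), (fa (pres Y (ccomp k1 k)) e0).
  split; [exact L2 | split].
  - rewrite (fun_src (res_fun HY _)), (res_comp_o HY), F1, !(mor_nat_o Hf), (res_comp_o HX). reflexivity.
  - rewrite (fun_tgt (res_fun HY _)), (res_comp_o HY). exact L3.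
Qed.

Lemma locally_ess_surj_stalk : locally_ess_surj p f -> ess_surj (stalk_fun p f).
Proof.
  intros H y. destruct (ob_germ_surj y) as [U [u [y0 ->]]].
  destruct (H U u y0) as [W [w [g [x [e [G [E1 E2]]]]]]].
  exists (ob_germ w x), (arr_germ w e). split.
  - rewrite (stalk_src_germ HY), (stalk_fun_ob_germ HY Hf), E1. reflexivity.
  - rewrite (stalk_tgt_germ HY), E2, <- (ob_germ_restrict HY _ G). reflexivity.
Qed.

Lemma stalk_equivalence_iff_locally :
  is_equivalence (stalk_fun p f) <->
  locally_faithful p f /\ locally_full p f /\ locally_ess_surj p f.
Proof.
  split.
  - intros [K [eta [eps [HK [Heta Heps]]]]].
    split; [| split].
    + apply stalk_faithful_locally, (equivalence_faithful (stalk_is_gpd p HX) Heta).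
    + apply stalk_full_locally.
      exact (equivalence_full (stalk_is_gpd p HX) (stalk_is_gpd p HY) (stalk_fun_is_fun p HX HY Hf) HK Heta Heps).
    + apply stalk_ess_surj_locally, (equivalence_ess_surj Heps).
  - intros [Hfa [Hfu Hes]].
    apply (fully_faithful_ess_surj_equivalence (stalk_is_gpd p HX) (stalk_is_gpd p HY) (stalk_fun_is_fun p HX HY Hf)).
    + apply locally_faithful_stalk, Hfa.
    + apply locally_full_stalk, Hfu.
    + apply locally_ess_surj_stalk, Hes.
Qed.

End StalkFunctorLocally.

(** * Homotopy fixed points *)

Lemma hob_eq (G : PreGpd) (t : PreFun G G) (o1 o2 : hob t) : proj1_sig o1 = proj1_sig o2 -> o1 = o2.
Proof. destruct o1, o2; simpl. intro. apply subset_eq_compat. auto. Qed.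
Lemma harr_eq (G : PreGpd) (t : PreFun G G) (a1 a2 : harr t) : proj1_sig a1 = proj1_sig a2 -> a1 = a2.
Proof. destruct a1, a2; simpl. intro. apply subset_eq_compat. auto. Qed.

Lemma hphi_src (G : PreGpd) (t : PreFun G G) (o : hob t) : src (hphi o) = hx o.
Proof. apply (proj2_sig o). Qed.
Lemma hphi_tgt (G : PreGpd) (t : PreFun G G) (o : hob t) : tgt (hphi o) = fo t (hx o).
Proof. apply (proj2_sig o). Qed.
Lemma hphi_cocycle (G : PreGpd) (t : PreFun G G) (o : hob t) : cmp (fa t (hphi o)) (hphi o) = idg (hx o).
Proof. apply (proj2_sig o). Qed.

Section HomotopyFixedPointGroupoid.
Variables (G : PreGpd) (t : PreFun G G).
Hypotheses (HG : is_gpd G) (Ht : is_fun t).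

Lemma hcmp_composable (g f : harr t) : fst (fst (proj1_sig g)) = snd (fst (proj1_sig f)) ->
  proj1_sig (hcmp HG Ht g f) =
    (fst (fst (proj1_sig f)), snd (fst (proj1_sig g)), cmp (snd (proj1_sig g)) (snd (proj1_sig f))).
Proof. intro H. unfold hcmp. destruct (excluded_middle_informative _); [reflexivity | contradiction]. Qed.

(* The inverse of [alpha : (x, phi) -> (x1, phi1)] is [alpha^-1]; its compatibility
   [phi alpha^-1 = bar(alpha^-1) phi1] follows by cancelling [bar alpha] on the left. *)
Lemma hfp_is_gpd : is_gpd (hfp_gpd HG Ht).
Proof.
  constructor; simpl.
  - reflexivity.
  - reflexivity.
  - intros g f Hc. rewrite hcmp_composable by exact Hc. reflexivity.
  - intros g f Hc. rewrite hcmp_composable by exact Hc. reflexivity.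
  - intro f. apply harr_eq. rewrite hcmp_composable by reflexivity.
    destruct f as [[[o1 o2] a] [P1 [P2 P3]]]; simpl in *. f_equal.
    rewrite <- P2. apply (cmp_id_l HG).
  - intro f. apply harr_eq. rewrite hcmp_composable by reflexivity.
    destruct f as [[[o1 o2] a] [P1 [P2 P3]]]; simpl in *. f_equal.
    rewrite <- P1. apply (cmp_id_r HG).
  - intros h g f H1 H2. apply harr_eq.
    rewrite (hcmp_composable (g := h) (f := hcmp HG Ht g f)) by (rewrite hcmp_composable; auto).
    rewrite (hcmp_composable (g := hcmp HG Ht h g) (f := f)) by (rewrite hcmp_composable; auto).
    rewrite !hcmp_composable by auto; simpl.
    destruct h as [[[o5 o6] c] [R1 [R2 R3]]], g as [[[o3 o4] b] [Q1 [Q2 Q3]]],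
      f as [[[o1 o2] a] [P1 [P2 P3]]]; simpl in *. subst.
    f_equal. apply (cmp_assoc HG); congruence.
  - intro f. destruct f as [[[o1 o2] a] [P1 [P2 P3]]]; simpl in P1, P2, P3.
    set (b := ginv HG a).
    assert (B : src b = hx o2 /\ tgt b = hx o1 /\ cmp (hphi o1) b = cmp (fa t b) (hphi o2)).
    { unfold b. rewrite (ginv_src HG), (ginv_tgt HG). split; [exact P2 | split; [exact P1 |]].
      destruct o1 as [[x1 f1] [S1 [S2 [S3 S4]]]], o2 as [[x2 f2] [T1 [T2 [T3 T4]]]].
      unfold hx, hphi in *; simpl in *.
      apply (cmp_cancel_l HG (g := fa t a)); [endpoints | endpoints |].
      rewrite (cmp_assoc HG), <- P3 by endpoints.
      rewrite (cmp_assoc HG), <- (fun_cmp Ht), (cmp_ginv_r HG), (fun_id Ht) by endpoints.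
      rewrite <- (cmp_assoc HG), (cmp_ginv_r HG) by endpoints.
      rewrite (cmp_idg_l HG), (cmp_idg_r HG) by endpoints. reflexivity. }
    exists (exist _ (o2, o1, b) B : harr t); simpl. split; [reflexivity | split; [reflexivity | split]].
    + apply harr_eq. rewrite hcmp_composable by reflexivity; simpl. f_equal.
      unfold b. rewrite (cmp_ginv_l HG), P1. reflexivity.
    + apply harr_eq. rewrite hcmp_composable by reflexivity; simpl. f_equal.
      unfold b. rewrite (cmp_ginv_r HG), P2. reflexivity.
Qed.

End HomotopyFixedPointGroupoid.

Lemma hfp_map_is_fun (G H : PreGpd) (tG : PreFun G G) (tH : PreFun H H)
    (HG : is_gpd G) (HtG : is_fun tG) (HH : is_gpd H) (HtH : is_fun tH)
    (F : PreFun G H) (HF : is_fun F) (invG : forall x, fo tG (fo tG x) = x)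
    (co : forall x, fo F (fo tG x) = fo tH (fo F x))
    (ca : forall a, fa F (fa tG a) = fa tH (fa F a)) :
  is_fun (hfp_map HG HtG HH HtH HF invG co ca).
Proof.
  constructor; simpl.
  - reflexivity.
  - reflexivity.
  - intro o. apply harr_eq; simpl. rewrite (fun_id HF). reflexivity.
  - intros g f Hc; simpl. unfold hcmp.
    repeat (destruct (excluded_middle_informative _) as [? | n]; [| exfalso; apply n; simpl; congruence]).
    apply harr_eq; simpl. f_equal. apply (fun_cmp HF).
    destruct g as [[[o3 o4] b] [Q1 [Q2 Q3]]], f as [[[o1 o2] a] [P1 [P2 P3]]]; simpl in *. congruence.
Qed.

Lemma hfp_is_pgpd (C : Cat) (X : PGpd C) (aX : GammaAction X) : is_pgpd (hfp aX).
Proof.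
  pose proof (pg_ax X) as HX.
  constructor; simpl.
  - intro U. apply hfp_is_gpd.
  - intros. apply hfp_map_is_fun.
  - intros U o. apply hob_eq; simpl.
    rewrite (res_id_o HX), (res_id_a HX). destruct o as [[? ?] ?]. reflexivity.
  - intros U a. apply harr_eq; simpl.
    destruct a as [[[o1 o2] al] P]; simpl. f_equal; [f_equal | apply (res_id_a HX)];
      apply hob_eq; simpl; rewrite (res_id_o HX), (res_id_a HX); unfold hx, hphi;
      [destruct o1 as [[? ?] ?] | destruct o2 as [[? ?] ?]]; reflexivity.
  - intros U V W f g o. apply hob_eq; simpl.
    rewrite (res_comp_o HX), (res_comp_a HX). reflexivity.
  - intros U V W f g a. apply harr_eq; simpl.
    destruct a as [[[o1 o2] al] P]; simpl. f_equal; [f_equal | apply (res_comp_a HX)];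
      apply hob_eq; simpl; rewrite (res_comp_o HX), (res_comp_a HX); reflexivity.
Qed.

Lemma hfp_mor_is_mor (C : Cat) (X Y : PGpd C) (aX : GammaAction X) (aY : GammaAction Y)
    (f : PMor X Y) (Hf : equivariant aX aY f) : is_mor (hfp_mor Hf).
Proof.
  pose proof (pm_ax f) as Hm.
  constructor; simpl.
  - intro U. apply hfp_map_is_fun.
  - intros U V h o. apply hob_eq; simpl. unfold hx, hphi; simpl.
    rewrite (mor_nat_o Hm), (mor_nat_a Hm). reflexivity.
  - intros U V h a. apply harr_eq; simpl.
    destruct a as [[[o1 o2] al] P]; simpl. f_equal; [f_equal | apply (mor_nat_a Hm)];
      apply hob_eq; simpl; unfold hx, hphi; simpl; rewrite (mor_nat_o Hm), (mor_nat_a Hm); reflexivity.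
Qed.

Section InvolutionConjugation.
Variables (G : PreGpd) (t : PreFun G G).
Hypotheses (HG : is_gpd G) (Ht : is_fun t)
  (t_invol_o : forall x, fo t (fo t x) = x) (t_invol_a : forall a, fa t (fa t a) = a).

Ltac inv_endpoints := endpoints_with ltac:(rewrite ?t_invol_o).

Lemma hob_cocycle_r (x : Ob G) (phi : Arr G) : src phi = x -> tgt phi = fo t x ->
  cmp (fa t phi) phi = idg x -> cmp phi (fa t phi) = idg (fo t x).
Proof.
  intros H1 H2 H3. apply (f_equal (fa t)) in H3.
  rewrite (fun_cmp Ht), t_invol_a, (fun_id Ht) in H3 by inv_endpoints. exact H3.
Qed.

(* Transport of a structure [psi : y -> bar y] along [e : x -> y]. *)
Definition conj_by (e psi : Arr G) : Arr G := cmp (fa t (ginv HG e)) (cmp psi e).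

Lemma cmp_bar_conj_by (e psi : Arr G) : src psi = tgt e -> tgt psi = fo t (tgt e) ->
  cmp (fa t e) (conj_by e psi) = cmp psi e.
Proof.
  intros H1 H2. unfold conj_by.
  rewrite (cmp_assoc HG) by inv_endpoints.
  rewrite <- (fun_cmp Ht), (cmp_ginv_r HG), (fun_id Ht) by inv_endpoints.
  apply (cmp_idg_l HG). inv_endpoints.
Qed.

Lemma conj_by_cocycle (e psi : Arr G) : src psi = tgt e -> tgt psi = fo t (tgt e) ->
  cmp (fa t psi) psi = idg (tgt e) ->
  cmp (fa t (conj_by e psi)) (conj_by e psi) = idg (src e).
Proof.
  intros H1 H2 H3. unfold conj_by.
  rewrite (fun_cmp Ht), (fun_cmp Ht), t_invol_a by inv_endpoints.
  rewrite <- !(cmp_assoc HG) by inv_endpoints.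
  rewrite (cmp_assoc HG (h := fa t e)) by inv_endpoints.
  rewrite <- (fun_cmp Ht), (cmp_ginv_r HG), (fun_id Ht) by inv_endpoints.
  rewrite (cmp_idg_l HG) by inv_endpoints.
  rewrite (cmp_assoc HG (h := fa t psi)), H3 by inv_endpoints.
  rewrite (cmp_idg_l HG) by inv_endpoints. apply (cmp_ginv_l HG).
Qed.

End InvolutionConjugation.

Section HomotopyFixedPointsLocally.
Variables (S : Site) (p : Point S) (X Y : PGpd S) (aX : GammaAction X) (aY : GammaAction Y)
  (f : PMor X Y).
Hypothesis Hf : equivariant aX aY f.

(* [endpoints_with] finds these in the context; some are used only that way. *)
Let HXs : forall U, is_gpd (psec X U) := sec_gpd (pg_ax X).
Let HYs : forall U, is_gpd (psec Y U) := sec_gpd (pg_ax Y).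
Let HXr : forall U V (h : chom V U), is_fun (pres X h) := res_fun (pg_ax X).
Let HYr : forall U V (h : chom V U), is_fun (pres Y h) := res_fun (pg_ax Y).
Let Hfu : forall U, is_fun (mc f U) := mor_fun (pm_ax f).
Let HtX : forall U, is_fun (tau aX U) := tau_fun aX.
Let HtY : forall U, is_fun (tau aY U) := tau_fun aY.

(* Objects are normalised to the form [bar (f (x|g))]: the action outermost, restrictions innermost. *)
Ltac normalize_ob :=
  rewrite ?(res_comp_o (pg_ax X)), ?(res_comp_o (pg_ax Y)), ?(mor_nat_o (pm_ax f)),
    ?(tau_res_o aX), ?(tau_res_o aY), ?(proj1 Hf), ?(tau_invol_o aX), ?(tau_invol_o aY).

Ltac rewrite_endpoint_hyps :=
  repeat match goal with
  | H : src ?a = ?r |- context [src ?a] =>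
      lazymatch r with context [src _] => fail | context [tgt _] => fail | _ => rewrite H end
  | H : tgt ?a = ?r |- context [tgt ?a] =>
      lazymatch r with context [src _] => fail | context [tgt _] => fail | _ => rewrite H end
  end.

Ltac hfp_endpoints :=
  endpoints_with ltac:(normalize_ob; rewrite ?hphi_src, ?hphi_tgt; rewrite_endpoint_hyps; normalize_ob).

Lemma locally_faithful_hfp : locally_faithful p f -> locally_faithful p (hfp_mor Hf).
Proof.
  intros H U u a b E1 E2 E3.
  destruct a as [[[o1 o2] al] [P1 [P2 P3]]], b as [[[o1' o2'] be] [Q1 [Q2 Q3]]]; simpl in *.
  subst o1' o2'.
  apply (f_equal (fun z : harr (tau aY U) => snd (proj1_sig z))) in E3; simpl in E3.
  destruct (H U u al be) as [W [w [g [G1 G2]]]]; [congruence | congruence | exact E3 |].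
  exists W, w, g. split; [exact G1 |]. apply harr_eq; simpl. rewrite G2. reflexivity.
Qed.

Lemma locally_full_hfp : locally_faithful p f -> locally_full p f -> locally_full p (hfp_mor Hf).
Proof.
  intros HF HL U u o o1 b E1 E2.
  destruct b as [[[q1 q2] be] [Q1 [Q2 Q3]]]; simpl in E1, E2. subst q1 q2.
  change (src be = fo (mc f U) (hx o)) in Q1. change (tgt be = fo (mc f U) (hx o1)) in Q2.
  change (cmp (fa (mc f U) (hphi o1)) be = cmp (fa (tau aY U) be) (fa (mc f U) (hphi o))) in Q3.
  destruct (HL U u (hx o) (hx o1) be Q1 Q2) as [W [w [g [al [G1 [A1 [A2 A3]]]]]]].
  destruct (HF W w (cmp (fa (pres X g) (hphi o1)) al) (cmp (fa (tau aX W) al) (fa (pres X g) (hphi o))))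
    as [W2 [w2 [g2 [G2 E]]]]; [hfp_endpoints | hfp_endpoints | |].
  - rewrite !(fun_cmp (Hfu _)) by hfp_endpoints.
    rewrite A3, <- (mor_nat_a (pm_ax f)), <- (fun_cmp (HYr _)) by hfp_endpoints.
    rewrite Q3, (fun_cmp (HYr _)) by hfp_endpoints.
    rewrite (tau_res_a aY), <- A3, <- (proj2 Hf), (mor_nat_a (pm_ax f)). reflexivity.
  - assert (Hh : src (fa (pres X g2) al) = fo (pres X (ccomp g g2)) (hx o) /\
                 tgt (fa (pres X g2) al) = fo (pres X (ccomp g g2)) (hx o1) /\
                 cmp (fa (pres X (ccomp g g2)) (hphi o1)) (fa (pres X g2) al) =
                 cmp (fa (tau aX W2) (fa (pres X g2) al)) (fa (pres X (ccomp g g2)) (hphi o))).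
    { split; [hfp_endpoints | split; [hfp_endpoints |]].
      rewrite !(res_comp_a (pg_ax X)), <- (fun_cmp (HXr _)) by hfp_endpoints.
      rewrite E, (fun_cmp (HXr _)), (tau_res_a aX) by hfp_endpoints. reflexivity. }
    exists W2, w2, (ccomp g g2).
    exists (exist _ (fo (pres (hfp aX) (ccomp g g2)) o, fo (pres (hfp aX) (ccomp g g2)) o1,
                     fa (pres X g2) al) Hh : harr (tau aX W2)).
    split; [rewrite !ptmap_comp; congruence | split; [reflexivity | split; [reflexivity |]]].
    apply harr_eq; simpl. unfold hmap_ob, hx, hphi; simpl.
    f_equal; [f_equal; apply hob_eq; simpl; rewrite (mor_nat_o (pm_ax f)), (mor_nat_a (pm_ax f));
              reflexivity |].
    rewrite <- (mor_nat_a (pm_ax f)), A3, <- (res_comp_a (pg_ax Y)). reflexivity.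
Qed.

Lemma hob_lift_locally : locally_faithful p f -> locally_full p f ->
  forall W (w : pt p W) (x : Ob (psec X W)) (psi : Arr (psec Y W)),
    src psi = fo (mc f W) x -> tgt psi = fo (mc f W) (fo (tau aX W) x) ->
    cmp (fa (tau aY W) psi) psi = idg (fo (mc f W) x) ->
    exists V (v : pt p V) (g : chom V W) (o : hob (tau aX V)),
      ptmap p g v = w /\ hx o = fo (pres X g) x /\ fa (mc f V) (hphi o) = fa (pres Y g) psi.
Proof.
  intros HF HL W w x psi S1 S2 S3.
  destruct (HL W w x (fo (tau aX W) x) psi S1 S2) as [W2 [w2 [g2 [ph [G2 [P1 [P2 P3]]]]]]].
  rewrite (tau_res_o aX) in P2.
  destruct (HF W2 w2 (cmp (fa (tau aX W2) ph) ph) (idg (fo (pres X g2) x))) as [W3 [w3 [g3 [G3 E3]]]];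
    [hfp_endpoints | hfp_endpoints | |].
  { rewrite (fun_cmp (Hfu _)) by hfp_endpoints.
    rewrite (proj2 Hf), P3, <- (tau_res_a aY), <- (fun_cmp (HYr _)) by hfp_endpoints.
    rewrite S3, (fun_id (HYr _)), (fun_id (Hfu _)), (mor_nat_o (pm_ax f)). reflexivity. }
  set (x3 := fo (pres X g3) (fo (pres X g2) x)).
  assert (H1 : src (fa (pres X g3) ph) = x3) by (unfold x3; hfp_endpoints).
  assert (H2 : tgt (fa (pres X g3) ph) = fo (tau aX W3) x3) by (unfold x3; hfp_endpoints).
  assert (H3 : cmp (fa (tau aX W3) (fa (pres X g3) ph)) (fa (pres X g3) ph) = idg x3).
  { rewrite <- (tau_res_a aX), <- (fun_cmp (HXr _)) by hfp_endpoints. rewrite E3, (fun_id (HXr _)). reflexivity. }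
  pose proof (hob_cocycle_r (tau_fun aX W3) (tau_invol_a aX (U := W3)) H1 H2 H3) as H4.
  exists W3, w3, (ccomp g2 g3), (exist _ (x3, fa (pres X g3) ph) (conj H1 (conj H2 (conj H3 H4)))).
  split; [rewrite ptmap_comp; congruence |].
  unfold hx, hphi, x3; simpl. rewrite (res_comp_o (pg_ax X)), (res_comp_a (pg_ax Y)).
  split; [reflexivity |]. rewrite <- (mor_nat_a (pm_ax f)), P3. reflexivity.
Qed.

Lemma locally_ess_surj_hfp :
  locally_faithful p f -> locally_full p f -> locally_ess_surj p f -> locally_ess_surj p (hfp_mor Hf).
Proof.
  intros HF HL HE U u o.
  destruct (HE U u (hx o)) as [W [w [g [x [e [G1 [E1 E2]]]]]]].
  set (psi := fa (pres Y g) (hphi o)).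
  assert (PS1 : src psi = tgt e) by (unfold psi; hfp_endpoints).
  assert (PS2 : tgt psi = fo (tau aY W) (tgt e)) by (unfold psi; hfp_endpoints).
  assert (PS3 : cmp (fa (tau aY W) psi) psi = idg (tgt e)).
  { unfold psi. rewrite <- (tau_res_a aY), <- (fun_cmp (HYr _)) by hfp_endpoints.
    rewrite hphi_cocycle, (fun_id (HYr _)), E2. reflexivity. }
  destruct (@hob_lift_locally HF HL W w x (conj_by (tau aY W) (HYs W) e psi))
    as [V [v [h [ox [Hv [Hx Hphi]]]]]];
    [unfold conj_by; hfp_endpoints | unfold conj_by; hfp_endpoints |
     rewrite (conj_by_cocycle (HYs W) (tau_fun aY W) (tau_invol_o aY (U := W)) (tau_invol_a aY (U := W))
       PS1 PS2 PS3), E1; reflexivity |].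
  set (e' := fa (pres Y h) e).
  assert (K1 : src e' = hx (fo (mc (hfp_mor Hf) V) ox)).
  { change (src e' = fo (mc f V) (hx ox)). rewrite Hx. unfold e'. hfp_endpoints. }
  assert (K2 : tgt e' = hx (fo (pres (hfp aY) (ccomp g h)) o)).
  { change (tgt e' = fo (pres Y (ccomp g h)) (hx o)). unfold e'. hfp_endpoints. }
  assert (K3 : cmp (hphi (fo (pres (hfp aY) (ccomp g h)) o)) e' =
               cmp (fa (tau aY V) e') (hphi (fo (mc (hfp_mor Hf) V) ox))).
  { change (cmp (fa (pres Y (ccomp g h)) (hphi o)) e' = cmp (fa (tau aY V) e') (fa (mc f V) (hphi ox))).
    unfold e'. rewrite (res_comp_a (pg_ax Y)), Hphi, <- (tau_res_a aY).
    fold psi. rewrite <- !(fun_cmp (HYr _)) by (unfold conj_by; hfp_endpoints).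
    rewrite (cmp_bar_conj_by (HYs W) (tau_fun aY W) PS1 PS2). reflexivity. }
  exists V, v, (ccomp g h), ox.
  exists (exist _ (fo (mc (hfp_mor Hf) V) ox, fo (pres (hfp aY) (ccomp g h)) o, e') (conj K1 (conj K2 K3))
          : harr (tau aY V)).
  split; [rewrite ptmap_comp; congruence | split; reflexivity].
Qed.

End HomotopyFixedPointsLocally.

Theorem mainTheorem8 (S : Site) (HS : enough_points S) (X Y : PGpd S)
    (aX : GammaAction X) (aY : GammaAction Y) (f : PMor X Y)
    (Hf : equivariant aX aY f) :
  local_we f -> local_we (hfp_mor Hf).
Proof.
  intros Hwe p.
  destruct (proj1 (stalk_equivalence_iff_locally p (pg_ax X) (pg_ax Y) (pm_ax f)) (Hwe p))
    as [Hfaithful [Hfull Hess]].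
  apply (stalk_equivalence_iff_locally p (hfp_is_pgpd aX) (hfp_is_pgpd aY) (hfp_mor_is_mor Hf)).
  split; [| split].
  - apply locally_faithful_hfp; assumption.
  - apply locally_full_hfp; assumption.
  - apply locally_ess_surj_hfp; assumption.
Qed.
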